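(* Let $\mathbb{F}$ be a field of characteristic $2$, $V$ a $4$-dimensional vector space over $\mathbb{F}$, $W=\bigwedge^2V$, and fix an isomorphism $\chi:\bigwedge^4V\to\mathbb{F}$. Let $w,x,y,z\in V$ with $\chi(w\wedge x\wedge y\wedge z)=1$. Then the element $U=(w\wedge x)(y\wedge z)+(w\wedge y)(z\wedge x)+(w\wedge z)(x\wedge y)$ of $S_2(W)$ does not depend on the choice of $w,x,y,z$, and it is fixed under the induced action of $\mathrm{SL}(V)$.
   Context: $S_2(W)=(W\otimes W)/\langle a\otimes b-b\otimes a\rangle$ is the symmetric square of $W$; the image of $a\otimes b$ is written $ab$. $\mathrm{SL}(V)$ acts naturally on $W$ and hence on $S_2(W)$. *)

From HB Require Import structures.
From mathcomp Require Import all_boot all_order all_algebra.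
Set Implicit Arguments. Unset Strict Implicit. Unset Printing Implicit Defensive.
Import GRing.Theory.
Local Open Scope ring_scope.

(* V = F^4, realised as row vectors 'rV[F]_4; a matrix g acts by v |-> v *m g. *)

Definition pidx := {p : 'I_4 * 'I_4 | (p.1 < p.2)%N}.

Section Ext.
Variable F : fieldType.

(* W = /\^2 V, in coordinates w.r.t. the basis e_i /\ e_j, i < j. *)
Local Notation W := {ffun pidx -> F}.

Definition wedge2 (v u : 'rV[F]_4) : W :=
  [ffun p => v 0 (val p).1 * u 0 (val p).2 - v 0 (val p).2 * u 0 (val p).1].

(* /\^4 V identified with F via w/\x/\y/\z |-> det of the matrix with rows
   w, x, y, z (the determinant is the universal alternating 4-form). *)
Definition rows4 (w x y z : 'rV[F]_4) : 'M[F]_4 :=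
  \matrix_(i < 4, j < 4) (nth w [:: w; x; y; z] i) 0 j.
Definition wedge4 (w x y z : 'rV[F]_4) : F := \det (rows4 w x y z).

(* W (x) W, in coordinates w.r.t. the basis b_p (x) b_q. *)
Local Notation WW := {ffun pidx * pidx -> F}.
Definition tens (a b : W) : WW := [ffun q => a q.1 * b q.2].

(* S_2(W) = (W (x) W) / < a(x)b - b(x)a > : two tensors represent the same
   element of S_2(W) iff their difference lies in the span of the a(x)b-b(x)a. *)
Definition S2eq (t t' : WW) : Prop :=
  exists s : seq (W * W),
    t - t' = \sum_(ab <- s) (tens ab.1 ab.2 - tens ab.2 ab.1).

(* the induced action of g on W: (/\^2 g)(e_i /\ e_j) = (e_i g) /\ (e_j g) *)
Definition act2 (g : 'M[F]_4) (a : W) : W :=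
  [ffun r => \sum_(p : pidx) a p * wedge2 (row (val p).1 g) (row (val p).2 g) r].

Definition actWW (g : 'M[F]_4) (t : WW) : WW :=
  [ffun r => \sum_(q : pidx * pidx) t q *
     tens (wedge2 (row (val q.1).1 g) (row (val q.1).2 g))
          (wedge2 (row (val q.2).1 g) (row (val q.2).2 g)) r].

Definition Urep (w x y z : 'rV[F]_4) : WW :=
  tens (wedge2 w x) (wedge2 y z) + tens (wedge2 w y) (wedge2 z x)
  + tens (wedge2 w z) (wedge2 x y).

End Ext.

From HB Require Import structures.
From mathcomp Require Import all_boot all_order all_algebra.
From mathcomp Require Import ring.
Import GRing.Theory.
Local Open Scope ring_scope.

(* A tensor t represents the same element of S_2(W) as t' as soon as both have
   the same diagonal and the same symmetrisation t(p,q) + t(q,p).  The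
   diagonal of U vanishes, and each coefficient of its symmetrisation is an
   alternating multilinear function of (w, x, y, z), hence a fixed multiple of
   det(w, x, y, z).  So U depends only on det(w, x, y, z); and g in SL(V) maps
   the representative of U built from (w, x, y, z) to the one built from
   (wg, xg, yg, zg), which has the same determinant. *)

Definition o0 : 'I_4 := Ordinal (isT : (0 < 4)%N).
Definition o1 : 'I_4 := Ordinal (isT : (1 < 4)%N).
Definition o2 : 'I_4 := Ordinal (isT : (2 < 4)%N).
Definition o3 : 'I_4 := Ordinal (isT : (3 < 4)%N).

Definition p01 : pidx := exist _ (o0, o1) isT.
Definition p02 : pidx := exist _ (o0, o2) isT.
Definition p03 : pidx := exist _ (o0, o3) isT.
Definition p12 : pidx := exist _ (o1, o2) isT.
Definition p13 : pidx := exist _ (o1, o3) isT.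
Definition p23 : pidx := exist _ (o2, o3) isT.

Lemma ord4_enumP (i : 'I_4) : i \in [:: o0; o1; o2; o3].
Proof. by case: i => [[|[|[|[|i]]]] hi]. Qed.

Lemma pidx_enumP (p : pidx) : p \in [:: p01; p02; p03; p12; p13; p23].
Proof. by case: p => [[[[|[|[|[|i]]]] hi] [[|[|[|[|j]]]] hj]] h]. Qed.

Lemma pidx_ind (P : pidx -> Prop) :
  P p01 -> P p02 -> P p03 -> P p12 -> P p13 -> P p23 -> forall p, P p.
Proof.
move=> P01 P02 P03 P12 P13 P23 p.
by move: (pidx_enumP p); rewrite !inE => /or4P[| | |/or3P[| |]] /eqP->.
Qed.

Section ExteriorSquare.
Variable F : fieldType.
Local Notation W := {ffun pidx -> F}.
Local Notation WW := {ffun pidx * pidx -> F}.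

Lemma big_ord4 (f : 'I_4 -> F) : \sum_(i < 4) f i = f o0 + f o1 + f o2 + f o3.
Proof.
rewrite (perm_big [:: o0; o1; o2; o3]) /=; last first.
  apply: uniq_perm; [exact: index_enum_uniq | by [] |].
  by move=> i; rewrite mem_index_enum ord4_enumP.
by rewrite !big_cons big_nil addr0 !addrA.
Qed.

Lemma big_pidx (f : pidx -> F) :
  \sum_(p : pidx) f p = f p01 + f p02 + f p03 + f p12 + f p13 + f p23.
Proof.
rewrite (perm_big [:: p01; p02; p03; p12; p13; p23]) /=; last first.
  apply: uniq_perm; [exact: index_enum_uniq | by [] |].
  by move=> p; rewrite mem_index_enum pidx_enumP.
by rewrite !big_cons big_nil addr0 !addrA.
Qed.

Lemma wedge4E (w x y z : 'rV[F]_4) : wedge4 w x y z =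
    w 0 o0 * x 0 o1 * y 0 o2 * z 0 o3 - w 0 o0 * x 0 o1 * y 0 o3 * z 0 o2
  - w 0 o0 * x 0 o2 * y 0 o1 * z 0 o3 + w 0 o0 * x 0 o2 * y 0 o3 * z 0 o1
  + w 0 o0 * x 0 o3 * y 0 o1 * z 0 o2 - w 0 o0 * x 0 o3 * y 0 o2 * z 0 o1
  - w 0 o1 * x 0 o0 * y 0 o2 * z 0 o3 + w 0 o1 * x 0 o0 * y 0 o3 * z 0 o2
  + w 0 o1 * x 0 o2 * y 0 o0 * z 0 o3 - w 0 o1 * x 0 o2 * y 0 o3 * z 0 o0
  - w 0 o1 * x 0 o3 * y 0 o0 * z 0 o2 + w 0 o1 * x 0 o3 * y 0 o2 * z 0 o0
  + w 0 o2 * x 0 o0 * y 0 o1 * z 0 o3 - w 0 o2 * x 0 o0 * y 0 o3 * z 0 o1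
  - w 0 o2 * x 0 o1 * y 0 o0 * z 0 o3 + w 0 o2 * x 0 o1 * y 0 o3 * z 0 o0
  + w 0 o2 * x 0 o3 * y 0 o0 * z 0 o1 - w 0 o2 * x 0 o3 * y 0 o1 * z 0 o0
  - w 0 o3 * x 0 o0 * y 0 o1 * z 0 o2 + w 0 o3 * x 0 o0 * y 0 o2 * z 0 o1
  + w 0 o3 * x 0 o1 * y 0 o0 * z 0 o2 - w 0 o3 * x 0 o1 * y 0 o2 * z 0 o0
  - w 0 o3 * x 0 o2 * y 0 o0 * z 0 o1 + w 0 o3 * x 0 o2 * y 0 o1 * z 0 o0.
Proof.
have entryE i j : rows4 w x y z i j = nth w [:: w; x; y; z] i 0 j by rewrite mxE.
rewrite /wedge4; move: (rows4 w x y z) entryE => A entryE.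
do 4! rewrite ?(expand_det_row _ ord0) ?big_ord_recr ?big_ord0 /cofactor /=.
rewrite ?det_mx00 !mxE.
(* Make the numeric values of the ordinals produced by the expansion visible,
   so that cbv can normalise them. *)
pose s := [:: o0; o1; o2; o3]; pose mc (i j : nat) := A (nth o0 s i) (nth o0 s j).
have mcE (i j : 'I_4) : A i j = mc i j.
  by case: i j => [[|[|[|[|i]]]] hi] [[|[|[|[|j]]]] hj];
    congr (A _ _); apply/val_inj.
rewrite !mcE.
cbv [bump nat_of_ord lift ord0 widen_ord ord_max leq subn subn_rec addn addn_rec
     eq_op Equality.sort].
rewrite /mc !entryE /=; ring.
Qed.

Lemma delta_rowE (i j : 'I_4) : (delta_mx 0 i : 'rV[F]_4) 0 j = (i == j)%:R.
Proof. by rewrite mxE eqxx eq_sym. Qed.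

Lemma big_pick (I J : finType) (e : I * J -> F) (i0 : I) (j0 : J) :
  \sum_(ij : I * J) (i0 == ij.1)%:R * ((j0 == ij.2)%:R * e ij) = e (i0, j0).
Proof.
rewrite (bigD1 (i0, j0)) //= !eqxx !mul1r big1 ?addr0 // => -[i j] /=.
by rewrite xpair_eqE negb_and => /orP[] /negPf; rewrite eq_sym => ->;
  rewrite !mul0r ?mulr0.
Qed.

Definition wbasis (c : F) (p : pidx) : W := [ffun r => c * (r == p)%:R].

Lemma S2eq_diag_sym (t t' : WW) :
  (forall p, t (p, p) = t' (p, p)) ->
  (forall p q, t (p, q) + t (q, p) = t' (p, q) + t' (q, p)) -> S2eq t t'.
Proof.
move=> diag_tt' sym_tt'.
have anti p q : (t - t') (q, p) = - (t - t') (p, q).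
  apply/eqP; rewrite !ffunE -subr_eq0 opprK addrACA -opprD subr_eq0.
  by rewrite sym_tt'.
pose e (pq : pidx * pidx) :=
  if (enum_rank pq.1 < enum_rank pq.2)%N then (t - t') pq else 0.
exists [seq (wbasis 1 pq.1, wbasis (e pq) pq.2) | pq <- index_enum _].
apply/ffunP => -[r s]; rewrite big_map sum_ffunE.
rewrite (eq_bigr (fun pq => (r == pq.1)%:R * ((s == pq.2)%:R * e pq)
                        - (s == pq.1)%:R * ((r == pq.2)%:R * e pq))); last first.
  move=> pq _; rewrite !ffunE /= !mul1r [e pq * (s == _)%:R]mulrC.
  by rewrite [e pq * (r == _)%:R]mulrC [_ * (s == pq.1)%:R]mulrC.
rewrite sumrB !big_pick /e /=.
case: ltngtP => [_|_|/val_inj/enum_rank_inj ->].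
- by rewrite subr0.
- by rewrite sub0r (anti r s) opprK.
- by rewrite !ffunE diag_tt' subrr subr0.
Qed.

Definition wedge_pairing (p q : pidx) : F :=
  wedge4 (delta_mx 0 (val p).1) (delta_mx 0 (val p).2)
         (delta_mx 0 (val q).1) (delta_mx 0 (val q).2).

Lemma Urep_diag (w x y z : 'rV[F]_4) p : Urep w x y z (p, p) = 0.
Proof. by elim/pidx_ind: p; rewrite !ffunE /=; ring. Qed.

Lemma Urep_sym (w x y z : 'rV[F]_4) p q :
  Urep w x y z (p, q) + Urep w x y z (q, p) = wedge4 w x y z * wedge_pairing p q.
Proof.
rewrite !ffunE /wedge_pairing !wedge4E !delta_rowE.
by elim/pidx_ind: p; elim/pidx_ind: q; rewrite /=; ring.
Qed.

Lemma S2eq_Urep (w x y z w' x' y' z' : 'rV[F]_4) :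
  wedge4 w x y z = wedge4 w' x' y' z' -> S2eq (Urep w x y z) (Urep w' x' y' z').
Proof.
move=> eq_wedge4; apply: S2eq_diag_sym => [p | p q].
  by rewrite !Urep_diag.
by rewrite !Urep_sym eq_wedge4.
Qed.

Lemma act2_wedge2 (g : 'M[F]_4) (v u : 'rV[F]_4) :
  act2 g (wedge2 v u) = wedge2 (v *m g) (u *m g).
Proof.
apply/ffunP => r; rewrite !ffunE big_pidx !ffunE !mxE !big_ord4.
by elim/pidx_ind: r; rewrite /=; ring.
Qed.

Lemma actWW_tens (g : 'M[F]_4) (a b : W) :
  actWW g (tens a b) = tens (act2 g a) (act2 g b).
Proof.
apply/ffunP => -[r s]; rewrite !ffunE /= big_distrlr /= pair_big /=.
by apply: eq_bigr => -[p q] _; rewrite !ffunE /= mulrACA.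
Qed.

Lemma actWWD (g : 'M[F]_4) (t t' : WW) :
  actWW g (t + t') = actWW g t + actWW g t'.
Proof.
apply/ffunP => r; rewrite !ffunE -big_split /=.
by apply: eq_bigr => q _; rewrite !ffunE mulrDl.
Qed.

Lemma actWW_Urep (g : 'M[F]_4) (w x y z : 'rV[F]_4) :
  actWW g (Urep w x y z) = Urep (w *m g) (x *m g) (y *m g) (z *m g).
Proof. by rewrite /Urep !actWWD !actWW_tens !act2_wedge2. Qed.

Lemma wedge4_mulmx (g : 'M[F]_4) (w x y z : 'rV[F]_4) :
  wedge4 (w *m g) (x *m g) (y *m g) (z *m g) = wedge4 w x y z * \det g.
Proof.
rewrite /wedge4 -det_mulmx; congr (\det _); apply/matrixP => i j.
rewrite !mxE; case: i => [[|[|[|[|i]]]] hi] //=; rewrite mxE.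
all: by apply: eq_bigr => k _; rewrite !mxE.
Qed.

End ExteriorSquare.

Theorem lemma3p5 (F : fieldType) (charF2 : 2%N \in [pchar F])
  (c : F) (hc : c != 0) (w x y z : 'rV[F]_4)
  (hwxyz : c * wedge4 w x y z = 1) :
  (forall w' x' y' z' : 'rV[F]_4, c * wedge4 w' x' y' z' = 1 ->
     S2eq (Urep w x y z) (Urep w' x' y' z')) /\
  (forall g : 'M[F]_4, \det g = 1 ->
     S2eq (actWW g (Urep w x y z)) (Urep w x y z)).
Proof.
split=> [w' x' y' z' hw'x'y'z' | g detg1].
  by apply: S2eq_Urep; apply: (mulfI hc); rewrite hwxyz hw'x'y'z'.
by rewrite actWW_Urep; apply: S2eq_Urep; rewrite wedge4_mulmx detg1 mulr1.
Qed.
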